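(* Let $N$ be a unary nfa in Chrobak normal form accepting the language $L\subseteq\{a\}^*$. Then $\mathrm{nsyn}(L)\le|N|$, the number of states of $N$.
   Context: A unary nfa is in Chrobak normal form if it has a single initial state $q_0$, its states consist of a path $q_0\xrightarrow{a}q_1\xrightarrow{a}\cdots\xrightarrow{a}q_m$ together with pairwise disjoint cycles $p_{i,0}\xrightarrow{a}p_{i,1}\xrightarrow{a}\cdots\xrightarrow{a}p_{i,\ell_i-1}\xrightarrow{a}p_{i,0}$ ($i=1,\ldots,k$), and the only further transitions are $q_m\xrightarrow{a}p_{i,0}$ for each $i$ (so $q_m$ is the only state that may have several successors); final states are arbitrary. $\mathrm{nsyn}(L)$ is the least number of states of a subatomic nfa accepting $L$, i.e. an nfa (several initial states allowed) all of whose states accept languages in the boolean algebra generated by the two-sided derivatives $u^{-1}Lv^{-1}=\{w:uwv\in L\}$. *)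

(* Unary alphabet {a}: the word a^n is represented by n : nat,
   concatenation of words is addition. *)
From mathcomp Require Import all_boot.
Set Implicit Arguments. Unset Strict Implicit. Unset Printing Implicit Defensive.

Definition lang := nat -> Prop.

Record nfa := NFA {
  st : finType;
  tr : st -> st -> bool;
  ini : pred st;
  fin : pred st }.

Fixpoint acc (A : nfa) (n : nat) (q : st A) : bool :=
  if n is n'.+1 then [exists q', tr q q' && acc n' q'] else fin q.

Definition state_lang (A : nfa) (q : st A) : lang := fun n => acc n q.

Definition nfa_lang (A : nfa) : lang := fun n => exists q : st A, ini q && acc n q.

Definition nstates (A : nfa) : nat := #|st A|.

(* two-sided derivative  u^{-1} L v^{-1} = { w | u w v \in L } *)
Definition dquot (L : lang) (u v : nat) : lang := fun w => L (u + w + v).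

Inductive in_BA (G : lang -> Prop) : lang -> Prop :=
| BA_gen : forall K, G K -> in_BA G K
| BA_empty : in_BA G (fun _ => False)
| BA_compl : forall K, in_BA G K -> in_BA G (fun w => ~ K w)
| BA_union : forall K1 K2, in_BA G K1 -> in_BA G K2 ->
               in_BA G (fun w => K1 w \/ K2 w)
| BA_ext : forall K1 K2, in_BA G K1 -> (forall w, K1 w <-> K2 w) -> in_BA G K2.

Definition derivs (L : lang) : lang -> Prop :=
  fun K => exists u v, forall w, K w <-> dquot L u v w.

Definition subatomic (L : lang) (A : nfa) : Prop :=
  forall q : st A, in_BA (derivs L) (state_lang q).

(* nsyn(L) <= n  : some subatomic nfa with at most n states accepts L *)
Definition nsyn_le (L : lang) (n : nat) : Prop :=
  exists A : nfa, subatomic L A /\ nstates A <= n /\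
                  forall w, nfa_lang A w <-> L w.

(* Chrobak normal form.  States of the canonical shape: path q_0..q_m
   (inl i, i : 'I_m.+1) and cycles p_{c,j} (inr (c, j), j : 'I_(l c)). *)
Definition chrobak_states (m k : nat) (l : 'I_k -> nat) : finType :=
  ('I_m.+1 + {c : 'I_k & 'I_(l c)})%type.

Definition chrobak_tr (m k : nat) (l : 'I_k -> nat)
    (p q : chrobak_states m l) : bool :=
  match p, q with
  | inl i, inl j => (i < m) && (val j == (val i).+1)
  | inl i, inr cj => (val i == m) && (val (tagged cj) == 0)
  | inr _, inl _ => false
  | inr ci, inr cj =>
      (tag ci == tag cj) && (val (tagged cj) == (val (tagged ci)).+1 %% l (tag ci))
  end.

Definition chrobak_nf (N : nfa) : Prop :=
  exists (m k : nat) (l : 'I_k -> nat) (f : st N -> chrobak_states m l),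
    [/\ forall c, 0 < l c,
        bijective f,
        forall p q, tr p q = chrobak_tr (f p) (f q) &
        forall q, ini q = (f q == inl ord0)].

From mathcomp Require Import all_boot zify.
From Stdlib Require Import Classical Setoid.
Set Implicit Arguments. Unset Strict Implicit. Unset Printing Implicit Defensive.

(* Keep the states and transitions of N and only change the final states
   on the cycles.  Beyond the path q_0 .. q_m, the word a^(m+1+y) lies in L
   iff some cycle c has a final state at position y mod l_c; this predicate
   "tail y" is therefore periodic with period P = prod_c l_c.  The
   "saturated" automaton makes the cycle state p_{c,j} final iff tail holds
   on the whole residue class of j modulo l_c.
   - It still accepts L: a residue class where tail holds everywhere
     contains y, and conversely a final state p_{c, y mod l_c} of N makes
     tail hold on the whole class of y.
   - Every state is subatomic: the path state q_i accepts the derivative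
     (a^i)^{-1} L, and, by periodicity, the cycle state p_{c,j} accepts the
     finite intersection of the derivatives (a^(m+1+j+kk l_c))^{-1} L,
     kk < P.
   The file first proves general facts on the boolean algebra of languages,
   on periodic predicates and on nfa isomorphisms, then computes the
   languages of the canonical Chrobak automaton, and derives the theorem. *)

Lemma BA_inter (G : lang -> Prop) (K1 K2 : lang) :
  in_BA G K1 -> in_BA G K2 -> in_BA G (fun w => K1 w /\ K2 w).
Proof.
move=> H1 H2; apply: (BA_ext (BA_compl (BA_union (BA_compl H1) (BA_compl H2)))).
by move=> w; split=> [nK | [K1w K2w] []]; [split; apply: NNPP; tauto | |].
Qed.

Lemma BA_bigcap (G : lang -> Prop) (D : nat -> lang) (n : nat) :
  (forall kk, in_BA G (D kk)) -> in_BA G (fun w => forall kk, kk < n -> D kk w).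
Proof.
move=> HD; elim: n => [|n IH].
  by apply: (BA_ext (BA_compl (BA_empty G))) => w; split=> // _ [].
apply: (BA_ext (BA_inter IH (HD n))) => w; split=> [[Dw Dnw] kk | Dw].
  by rewrite ltnS leq_eqVlt => /orP[/eqP-> | /Dw].
by split=> [kk lt_kn|]; apply: Dw => //; apply: ltnW.
Qed.

Lemma BA_deriv (L : lang) (u v : nat) : in_BA (derivs L) (dquot L u v).
Proof. by apply: BA_gen; exists u, v. Qed.

(* This turns a residue-class condition into a finite one. *)
Lemma periodic_class (T : nat -> bool) (P l x : nat) :
  0 < P -> l %| P -> (forall y d, T (y + d * P) = T y) ->
  (forall kk, kk < P -> T (x + kk * l)) <-> (forall y, y = x %[mod l] -> T y).
Proof.
move=> P_gt0 /dvdnP[Q defP] Tper; split=> [Tx y eq_yx | Tcls kk _]; last first.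
  by apply: Tcls; rewrite addnC modnMDl.
have Q_gt0 : 0 < Q by move: P_gt0; rewrite defP muln_gt0 => /andP[].
pose z := y + x * P.
have le_xz : x <= z by rewrite /z; nia.
have /dvdnP[q def_zx] : l %| z - x.
  by rewrite -eqn_mod_dvd // /z defP mulnA addnC modnMDl eq_yx.
have def_z : z = x + q %% Q * l + q %/ Q * P.
  by move: def_zx (divn_eq q Q); rewrite defP; nia.
rewrite -(Tper y x) -/z def_z Tper; apply: Tx.
by have := ltn_pmod q Q_gt0; move: P_gt0; rewrite defP; nia.
Qed.

Definition nfa_iso (A B : nfa) (f : st A -> st B) : Prop :=
  [/\ bijective f, forall p q, tr p q = tr (f p) (f q),
      forall q, ini q = ini (f q) & forall q, fin q = fin (f q)].

Lemma accS (A : nfa) (n : nat) (q : st A) :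
  acc n.+1 q = [exists q', tr q q' && acc n q'].
Proof. by []. Qed.

Lemma iso_acc (A B : nfa) (f : st A -> st B) :
  nfa_iso f -> forall n q, acc n q = acc n (f q).
Proof.
case=> [[h fK hK] Htr _ Hfin]; elim=> [|n IH] q; first exact: Hfin.
rewrite !accS; apply/existsP/existsP.
  by case=> q' /andP[t_q Hq']; exists (f q'); rewrite -Htr t_q -IH.
by case=> p /andP[t_fq Hp]; exists (h p); rewrite Htr hK t_fq IH hK.
Qed.

Lemma iso_lang (A B : nfa) (f : st A -> st B) :
  nfa_iso f -> forall w, nfa_lang A w <-> nfa_lang B w.
Proof.
move=> isof; have [[h _ hK] _ Hini _] := isof; move=> w; split=> [[q] | [p]].
  by rewrite Hini (iso_acc isof) => Hq; exists (f q).
by rewrite -{1 2}[p]hK -Hini -(iso_acc isof) => Hp; exists (h p).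
Qed.

Lemma iso_subatomic (L : lang) (A B : nfa) (f : st A -> st B) :
  nfa_iso f -> subatomic L B -> subatomic L A.
Proof.
move=> isof subB q; apply: BA_ext (subB (f q)) _ => w.
by rewrite /state_lang (iso_acc isof).
Qed.

Section ChrobakAutomaton.

Variables (m k : nat) (l : 'I_k -> nat).
Hypothesis l_gt0 : forall c, 0 < l c.

Local Notation cstate := (chrobak_states m l).

Definition chrobak_nfa (g : pred cstate) : nfa :=
  NFA (@chrobak_tr m k l) (pred1 (inl ord0)) g.

Local Notation cacc g n p := (@acc (chrobak_nfa g) n p).

Lemma chrobak_nfa_lang (g : pred cstate) (w : nat) :
  nfa_lang (chrobak_nfa g) w <-> cacc g w (inl ord0).
Proof.
by split=> [[q /andP[/eqP-> //]] | Hw]; exists (inl ord0); apply/andP.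
Qed.

Lemma caccS (g : pred cstate) (n : nat) (p : cstate) :
  cacc g n.+1 p = [exists p', chrobak_tr p p' && cacc g n p'].
Proof. by []. Qed.

Definition cyc (c : 'I_k) (j : nat) : cstate :=
  inr (Tagged (fun c => 'I_(l c)) (Ordinal (ltn_pmod j (l_gt0 c)))).

Lemma inr_cyc (cj : {c : 'I_k & 'I_(l c)}) : inr cj = cyc (tag cj) (tagged cj).
Proof.
case: cj => c j; rewrite /cyc; congr (inr (Tagged _ _)).
by apply: val_inj; rewrite /= modn_small.
Qed.

Lemma eq_cyc (c : 'I_k) (j1 j2 : nat) :
  j1 = j2 %[mod l c] -> cyc c j1 = cyc c j2.
Proof. by move=> E; rewrite /cyc; congr (inr (Tagged _ _)); apply: val_inj. Qed.

Lemma tr_cyc (c : 'I_k) (j : nat) (p : cstate) :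
  chrobak_tr (cyc c j) p = (p == cyc c j.+1).
Proof.
have succ_mod : (j %% l c).+1 %% l c = j.+1 %% l c.
  by rewrite -addn1 modnDml addn1.
apply/idP/eqP => [| ->]; last by rewrite /= eqxx succ_mod eqxx.
case: p => [//|[c' j']] /= /andP[/eqP Ec /eqP Ej]; subst c'.
by congr (inr (Tagged _ _)); apply: val_inj; rewrite /= Ej succ_mod.
Qed.

Lemma acc_cyc (g : pred cstate) (n : nat) (c : 'I_k) (j : nat) :
  cacc g n (cyc c j) = g (cyc c (j + n)).
Proof.
elim: n j => [|n IH] j; first by rewrite addn0.
rewrite caccS -addSnnS -IH; apply/existsP/idP => [[p] | Hn].
  by rewrite tr_cyc => /andP[/eqP-> //].
by exists (cyc c j.+1); rewrite tr_cyc eqxx.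
Qed.

Lemma acc_from_start (g : pred cstate) (i : 'I_m.+1) (n : nat) :
  cacc g (i + n) (inl ord0) = cacc g n (inl i).
Proof.
case: i => i; elim: i n => [|i IH] n lt_im.
  by congr (cacc g n (inl _)); apply: val_inj.
rewrite addSnnS (IH n.+1 (ltnW lt_im)) caccS.
apply/existsP/idP => [[[i'|cj] /andP[/= Htr Hn]] | Hn].
- by case/andP: Htr => _ /eqP E; congr (cacc g n (inl _)): Hn; apply: val_inj.
- by case/andP: Htr => /eqP E _; exfalso; move: lt_im; rewrite /= E ltnn.
- by exists (inl (Ordinal lt_im)); rewrite /= eqxx andbT; apply/andP.
Qed.

Definition tail (g : pred cstate) (y : nat) : bool := [exists c, g (cyc c y)].

Lemma acc_start_tail (g : pred cstate) (y : nat) :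
  cacc g (m.+1 + y) (inl ord0) = tail g y.
Proof.
rewrite addSnnS (acc_from_start g ord_max) caccS.
apply/existsP/existsP => [[[i|cj] /andP[/= Htr Hy]] | [c Hy]].
- by move: Htr; rewrite ltnn.
- exists (tag cj); move: Hy; case/andP: Htr => _ /eqP E0.
  by rewrite inr_cyc E0 acc_cyc.
- by exists (cyc c 0); rewrite /= eqxx mod0n acc_cyc.
Qed.

Definition period : nat := \prod_(c < k) l c.

Lemma period_gt0 : 0 < period.
Proof. exact: prodn_gt0. Qed.

Lemma dvdn_period (c : 'I_k) : l c %| period.
Proof. by rewrite /period (bigD1 c) //= dvdn_mulr. Qed.

Lemma tail_periodic (g : pred cstate) (y d : nat) :
  tail g (y + d * period) = tail g y.
Proof.
apply: eq_existsb => c; congr g; apply: eq_cyc.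
by case/dvdnP: (dvdn_period c) => Q ->; rewrite mulnA addnC modnMDl.
Qed.

(* Saturated final states: p_{c,j} is final iff tail holds at
   j, j + l_c, .., j + (period-1) l_c, i.e. on the class of j mod l_c. *)
Definition saturate (g : pred cstate) : pred cstate := fun p =>
  if p is inr cj
  then [forall kk : 'I_period, tail g (tagged cj + kk * l (tag cj))]
  else g p.

Lemma saturate_cyc (g : pred cstate) (c : 'I_k) (j : nat) :
  saturate g (cyc c j) <-> (forall y, y = j %[mod l c] -> tail g y).
Proof.
have class := periodic_class (j %% l c) period_gt0 (dvdn_period c)
                             (tail_periodic g).
transitivity (forall y, y = j %% l c %[mod l c] -> tail g y);
  last by rewrite modn_mod.
rewrite -class /cyc /=.
split=> [/forallP Hj kk lt_kk | Hj]; first exact: (Hj (Ordinal lt_kk)).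
by apply/forallP => kk; apply: Hj.
Qed.

Lemma tail_saturate (g : pred cstate) (y : nat) :
  tail (saturate g) y = tail g y.
Proof.
apply/existsP/existsP => [[c /saturate_cyc Hc] | [c Hc]].
  by case/existsP: (Hc y erefl) => c' Hc'; exists c'.
exists c; apply/saturate_cyc => z eq_zy; apply/existsP; exists c.
by rewrite (eq_cyc eq_zy).
Qed.

Lemma saturate_word (g : pred cstate) (n : nat) :
  cacc (saturate g) n (inl ord0) = cacc g n (inl ord0).
Proof.
case: (leqP n m) => [le_nm | lt_mn].
  pose i : 'I_m.+1 := Ordinal (le_nm : n < m.+1).
  by rewrite -(addn0 n) -[n]/(nat_of_ord i) !acc_from_start.
by rewrite -(subnKC lt_mn) !acc_start_tail tail_saturate.
Qed.

(* Every state of the saturated automaton is subatomic for the language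
   of the original one: path states accept derivatives, cycle states
   finite intersections of derivatives. *)
Lemma saturate_subatomic (g : pred cstate) (L : lang) :
  (forall w, L w <-> cacc g w (inl ord0)) ->
  subatomic L (chrobak_nfa (saturate g)).
Proof.
move=> HL [i | cj].
  apply: BA_ext (BA_deriv L i 0) _ => w.
  by rewrite /dquot addn0 HL /state_lang -saturate_word acc_from_start.
rewrite inr_cyc; set c := tag cj; set j : nat := tagged cj.
pose derivs_in_BA kk := BA_deriv L (m.+1 + (j + kk * l c)) 0.
apply: BA_ext (BA_bigcap period derivs_in_BA) _.
move=> w; rewrite /state_lang acc_cyc saturate_cyc.
rewrite -(periodic_class _ period_gt0 (dvdn_period c) (tail_periodic g)).
have deriv_tail kk :
    dquot L (m.+1 + (j + kk * l c)) 0 w <-> tail g (j + w + kk * l c).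
  rewrite /dquot (_ : _ + w + 0 = m.+1 + (j + w + kk * l c)).
    by rewrite HL acc_start_tail.
  by rewrite addn0 -!addnA [w + _]addnC.
by split=> Hw kk /Hw /deriv_tail.
Qed.

End ChrobakAutomaton.

Theorem mainTheorem16 (N : nfa) (L : lang) :
  chrobak_nf N -> (forall w, nfa_lang N w <-> L w) -> nsyn_le L (nstates N).
Proof.
case: N => S t i fn [m [k [l [f [l_gt0 f_bij Htr Hini]]]]] HL.
have [finv fK _] := f_bij.
pose g p := fn (finv p).
pose A := NFA t i (fun q => saturate l_gt0 g (f q)).
have isoN : @nfa_iso (NFA t i fn) (chrobak_nfa g) f.
  by split=> // q; rewrite /= /g fK.
have isoA : @nfa_iso A (chrobak_nfa (saturate l_gt0 g)) f by [].
have HLg : forall w, L w <-> acc (A := chrobak_nfa g) w (inl ord0).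
  by move=> w; rewrite -HL (iso_lang isoN) chrobak_nfa_lang.
exists A; split; first exact: iso_subatomic isoA (saturate_subatomic HLg).
split=> // w; rewrite (iso_lang isoA) chrobak_nfa_lang saturate_word.
by rewrite -chrobak_nfa_lang -(iso_lang isoN).
Qed.
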